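(* Let $J$ be an ideal of $\mathcal{O}_n$ of finite colength and let $L=\{j,\dots,n\}$ for some $j\in\{1,\dots,n\}$. Then $\operatorname{in}(J_L)=\operatorname{in}(J)_L$.
   Context: $\mathcal{O}_n$ is the ring of germs of analytic functions $(\mathbb{C}^n,0)\to\mathbb{C}$ in coordinates $x_1,\dots,x_n$. For $L\subseteq\{1,\dots,n\}$ nonempty, $\mathcal{O}_{n,L}$ is the subring of germs depending only on the variables $x_i$, $i\in L$. For $f=\sum_k a_kx^k\in\mathcal{O}_n$, $f_L$ is the sum of the terms $a_kx^k$ with $k_i=0$ for all $i\notin L$; for an ideal $J$ of $\mathcal{O}_n$, $J_L$ is the ideal of $\mathcal{O}_{n,L}$ generated by all $f_L$, $f\in J$. Monomials are ordered by the negative lexicographical order: $x^\alpha>x^\beta$ iff there is $i$ with $(\alpha_1,\dots,\alpha_{i-1})=(\beta_1,\dots,\beta_{i-1})$ and $\alpha_i<\beta_i$ (in $\mathcal{O}_{n,L}$ one uses the restriction of this order to monomials in the variables $x_i$, $i\in L$). For $f\neq0$, $\operatorname{in}(f)$ is the largest monomial in the support of $f$, and the initial ideal $\operatorname{in}(K)$ of an ideal $K$ is the ideal generated by all $\operatorname{in}(f)$, $f\in K$ (computed in $\mathcal{O}_{n,L}$ for $K=J_L$). *)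

(* O_n is modelled as the ring of convergent power series
   in n variables over C = R[i], R a realType (the real numbers). *)
From HB Require Import structures.
From mathcomp Require Import all_boot all_order all_algebra.
From mathcomp Require Import reals.
From mathcomp.real_closed Require Import complex.
Set Implicit Arguments. Unset Strict Implicit. Unset Printing Implicit Defensive.
Import Order.TTheory GRing.Theory Num.Theory.
Local Open Scope ring_scope.

(* exponent vectors k = (k_0, ..., k_{n-1}) (variables indexed from 0) *)
Definition expo (n : nat) := {ffun 'I_n -> nat}.

Definition ser (R : realType) (n : nat) := expo n -> R[i].

Definition tdeg n (k : expo n) : nat := (\sum_(i < n) k i)%N.

(* germs of analytic functions = convergent power series *)
Definition convergent (R : realType) n (f : ser R n) : Prop :=
  exists (r M : R), 0 < r /\ forall k, `|f k| * ((r%:C)%C) ^+ tdeg k <= (M%:C)%C.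

Definition ser0 (R : realType) n : ser R n := fun _ => 0.
Definition seradd (R : realType) n (f g : ser R n) : ser R n := fun k => f k + g k.
Definition sersub (R : realType) n (f g : ser R n) : ser R n := fun k => f k - g k.
Definition serscale (R : realType) n (c : R[i]) (f : ser R n) : ser R n :=
  fun k => c * f k.

Definition exp_of n m (a : {ffun 'I_n -> 'I_m}) : expo n := [ffun i => nat_of_ord (a i)].
Definition expsub n (k a : expo n) : expo n := [ffun i => (k i - a i)%N].

(* Cauchy product: (f g)_k = sum_{a <= k} f_a g_{k-a} *)
Definition sermul (R : realType) n (f g : ser R n) : ser R n := fun k =>
  \sum_(a : {ffun 'I_n -> 'I_(\max_(i < n) k i).+1}
          | [forall i, (exp_of a i <= k i)%N])
     f (exp_of a) * g (expsub k (exp_of a)).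

Definition monom (R : realType) n (alpha : expo n) : ser R n :=
  fun k => if k == alpha then 1 else 0.

Definition is_ideal (R : realType) n (J : ser R n -> Prop) : Prop :=
  [/\ forall f, J f -> convergent f,
      J (@ser0 R n),
      forall f g, J f -> J g -> J (seradd f g)
    & forall h f, convergent h -> J f -> J (sermul h f)].

(* finite colength: O_n / J is a finite-dimensional C-vector space,
   i.e. spanned by the classes of finitely many germs *)
Definition finite_colength (R : realType) n (J : ser R n -> Prop) : Prop :=
  exists (m : nat) (g : 'I_m -> ser R n),
    (forall i, convergent (g i)) /\
    forall f, convergent f ->
      exists c : 'I_m -> R[i],
        J (sersub f (fun k => \sum_(i < m) c i * g i k)).

Definition OnL (R : realType) n (L : pred 'I_n) (f : ser R n) : Prop :=
  convergent f /\ forall k, f k != 0 -> forall i, ~~ L i -> k i = 0%N.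

Definition restrict (R : realType) n (L : pred 'I_n) (f : ser R n) : ser R n :=
  fun k => if [forall i, ~~ L i ==> (k i == 0%N)] then f k else 0.

Definition gen_ideal (R : realType) n (S G : ser R n -> Prop) (f : ser R n) : Prop :=
  exists (m : nat) (h g : 'I_m -> ser R n),
    (forall i, S (h i)) /\ (forall i, G (g i)) /\
    f = (fun k => \sum_(i < m) sermul (h i) (g i) k).

Definition restr_ideal (R : realType) n (L : pred 'I_n) (J : ser R n -> Prop) :=
  gen_ideal (OnL L) (fun g => exists f, J f /\ g = restrict L f).

(* negative lexicographical order: x^a > x^b iff a_i < b_i at the first
   index where they differ *)
Definition neglex_gt n (a b : expo n) : Prop :=
  exists i : 'I_n, (forall i' : 'I_n, (i' < i)%N -> a i' = b i') /\ (a i < b i)%N.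

Definition is_initial (R : realType) n (f : ser R n) (alpha : expo n) : Prop :=
  f alpha != 0 /\ forall beta, f beta != 0 -> beta <> alpha -> neglex_gt alpha beta.

(* initial ideal of K, computed in the ring S (O_n or O_{n,L}) *)
Definition init_ideal (R : realType) n (S K : ser R n -> Prop) :=
  gen_ideal S (fun g => exists f alpha,
                 K f /\ f <> @ser0 R n /\ is_initial f alpha /\ g = monom R alpha).

(* L = {j, ..., n} (paper indexing) = {i : 'I_n | j <= i} (0-based) *)
Definition Lfrom n (j : 'I_n) : pred 'I_n := fun i => (j <= i)%N.

(* Two observations make restriction to [L] and passage to initial monomials
   commute.  First, restriction to [L] is [O_{n,L}]-linear, so [J_L] consists
   exactly of the restrictions of elements of [J].  Second, for [L = {j, ..., n}]
   the monomials in the variables of [L] dominate all others in the negative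
   lexicographic order, so [in(F_L) = x^a] forces [in(F) = x^a]; conversely if
   [in(F) = x^a] is a monomial in the variables of [L] then [in(F_L) = x^a], and
   restricting a multiple of [x^a] yields [0] or a multiple of [x^a] in
   [O_{n,L}]. *)

From Pilot Require Import Defs.
From HB Require Import structures.
From mathcomp Require Import all_boot all_order all_algebra.
From mathcomp Require Import reals.
From mathcomp.real_closed Require Import complex.
From Stdlib Require Import FunctionalExtensionality.
From mathcomp Require Import ring lra.
Set Implicit Arguments. Unset Strict Implicit. Unset Printing Implicit Defensive.
Import Order.TTheory GRing.Theory Num.Theory.
Local Open Scope ring_scope.

Lemma sum_geom_half_le (K : numFieldType) (h : K) N : 0 <= h -> 2 * h = 1 -> \sum_(j < N) h ^+ j <= 2.
Proof.
move=> h_ge0 h_half.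
have -> : \sum_(j < N) h ^+ j = 2 - 2 * h ^+ N.
  elim: N => [|N IH]; first by rewrite big_ord0 expr0 mulr1 subrr.
  by rewrite big_ord_recr /= IH exprS mulrA h_half mul1r; ring.
by rewrite gerBl mulr_ge0 ?exprn_ge0.
Qed.

Section PowerSeries.
Variables (R : realType) (n : nat).
Local Notation ser := (ser R n).
Local Notation expo := (expo n).

Definition expo0 : expo := [ffun=> 0%N].
Definition expadd (a b : expo) : expo := [ffun i => (a i + b i)%N].
Definition expo_le (a b : expo) := [forall i, (a i <= b i)%N].

Lemma exp_of_inj m : injective (@exp_of n m).
Proof.
by move=> a b /ffunP eq_ab; apply/ffunP=> i; apply/val_inj; have := eq_ab i; rewrite !ffunE.
Qed.

(* [sermul] sums over exponents coded in ['I_(max k).+1]; every [a <= k] has such a code. *)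
Definition expo_code (k a : expo) : {ffun 'I_n -> 'I_(\max_(i < n) k i).+1} :=
  [ffun i => inord (a i)].

Lemma exp_of_code (k a : expo) : expo_le a k -> exp_of (expo_code k a) = a.
Proof.
move=> /forallP le_ak; apply/ffunP=> i; rewrite !ffunE inordK //.
by rewrite ltnS (leq_trans (le_ak i)) // (leq_bigmax_cond (F := fun i => k i)).
Qed.

Lemma expsubK (k a : expo) : expo_le a k -> expadd (expsub k a) a = k.
Proof. by move/forallP=> le_ak; apply/ffunP=> i; rewrite !ffunE subnK. Qed.

Lemma expsub_le (k a : expo) : expo_le (expsub k a) k.
Proof. by apply/forallP=> i; rewrite ffunE leq_subr. Qed.

Lemma sermul_monomr (f : ser) (a k : expo) :
  sermul f (monom R a) k = if expo_le a k then f (expsub k a) else 0.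
Proof.
rewrite /sermul; case: ifP => le_ak.
- have le_ka : expo_le (expsub k a) k := expsub_le k a.
  rewrite (bigD1 (expo_code k (expsub k a))) /=; last first.
    by rewrite exp_of_code //; apply/forallP/forallP.
  rewrite [X in _ + X]big1 ?addr0 => [|b /andP[/forallP le_bk ne_b]].
    rewrite exp_of_code // /monom; case: eqP => [_|]; first by rewrite mulr1.
    by case; apply/ffunP=> i; rewrite !ffunE subKn //; apply/(forallP le_ak).
  rewrite /monom; case: eqP => [eq_a|]; last by rewrite mulr0.
  case/negP: ne_b; apply/eqP/exp_of_inj; rewrite exp_of_code //.
  by apply/ffunP=> i; rewrite -eq_a !ffunE subKn //; have := le_bk i; rewrite ffunE.
- apply: big1 => b /forallP le_bk; rewrite /monom; case: eqP; last by rewrite mulr0.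
  by move=> eq_a; case/negP: le_ak; apply/forallP=> i; rewrite -eq_a ffunE leq_subr.
Qed.

Lemma sermul_monoml (g : ser) (a k : expo) :
  sermul (monom R a) g k = if expo_le a k then g (expsub k a) else 0.
Proof.
rewrite /sermul; case: ifP => le_ak.
- rewrite (bigD1 (expo_code k a)) /=; last by rewrite exp_of_code //; apply/forallP/forallP.
  rewrite [X in _ + X]big1 ?addr0 => [|b /andP[/forallP le_bk ne_b]].
    by rewrite exp_of_code // /monom eqxx mul1r.
  rewrite /monom; case: eqP => [eq_a|]; last by rewrite mul0r.
  by case/negP: ne_b; apply/eqP/exp_of_inj; rewrite exp_of_code.
- apply: big1 => b /forallP le_bk; rewrite /monom; case: eqP; last by rewrite mul0r.
  by move=> eq_a; case/negP: le_ak; apply/forallP=> i; rewrite -eq_a.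
Qed.

Lemma sermul1 (g : ser) : sermul (monom R expo0) g = g.
Proof.
apply: functional_extensionality => k; rewrite sermul_monoml.
have -> : expo_le expo0 k by apply/forallP=> i; rewrite ffunE.
by congr g; apply/ffunP=> i; rewrite !ffunE subn0.
Qed.

Lemma sermulr0 (f : ser) : sermul f (@ser0 R n) = @ser0 R n.
Proof. by apply: functional_extensionality => k; apply: big1 => a _; rewrite mulr0. Qed.

Lemma sermul_neq0 (f g : ser) k : sermul f g k != 0 ->
  exists a b, [/\ f a != 0, g b != 0 & k = expadd a b].
Proof.
rewrite /sermul => /eqP nz_fg.
have [/existsP[a /andP[/forallP le_ak]]|/existsPn none] := boolP [exists a :
    {ffun 'I_n -> 'I_(\max_(i < n) k i).+1},
    [forall i, (exp_of a i <= k i)%N] &&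
    (f (exp_of a) * g (expsub k (exp_of a)) != 0)].
  rewrite mulf_eq0 negb_or => /andP[nz_f nz_g].
  exists (exp_of a), (expsub k (exp_of a)); split=> //.
  by apply/ffunP=> i; rewrite !ffunE subnKC //; have := le_ak i; rewrite ffunE.
by case: nz_fg; apply: big1 => a le_ak; have := none a; rewrite le_ak negbK => /eqP.
Qed.

Lemma sermul_sumr m (h : ser) (g : 'I_m -> ser) :
  sermul h (fun k => \sum_(i < m) g i k) = (fun k => \sum_(i < m) sermul h (g i) k).
Proof.
apply: functional_extensionality => k.
by rewrite /sermul exchange_big /=; apply: eq_bigr => a _; rewrite mulr_sumr.
Qed.

Definition bounded_by (f : ser) (r M : R) :=
  forall k, `|f k| * (r%:C)%C ^+ tdeg k <= (M%:C)%C.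

Lemma tdeg_expadd (a b : expo) : tdeg (expadd a b) = (tdeg a + tdeg b)%N.
Proof. by rewrite /tdeg -big_split; apply: eq_bigr => i _; rewrite ffunE. Qed.

Lemma bounded_by_ge0 (f : ser) r M : 0 <= r -> bounded_by f r M -> 0 <= M.
Proof.
move=> r_ge0 /(_ expo0) bd0; suff : 0 <= (M%:C)%C :> R[i] by rewrite lecR.
by apply: le_trans bd0; rewrite mulr_ge0 ?normr_ge0 ?exprn_ge0 ?lecR.
Qed.

Lemma bounded_by_le (f : ser) r r' M : 0 <= r' <= r ->
  bounded_by f r M -> bounded_by f r' M.
Proof.
move=> /andP[r'_ge0 le_r'r] bd_f k; apply: le_trans (bd_f k).
by rewrite ler_wpM2l ?normr_ge0 // lerXn2r ?nnegrE ?lecR ?(le_trans r'_ge0).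
Qed.

(* The sum factors over the coordinates into [n] geometric sums. *)
Lemma sum_geom_half_tdeg_le (h : R[i]) N (k : expo) : 0 <= h -> 2 * h = 1 ->
  \sum_(a : {ffun 'I_n -> 'I_N} | [forall i, (exp_of a i <= k i)%N])
     h ^+ tdeg (exp_of a) <= 2 ^+ n.
Proof.
move=> h_ge0 h_half; rewrite big_mkcond /=.
pose F (i : 'I_n) (j : 'I_N) := if (j <= k i)%N then h ^+ j else 0.
have F_ge0 i j : 0 <= F i j by rewrite /F; case: ifP; rewrite ?exprn_ge0.
have -> : \sum_(a : {ffun 'I_n -> 'I_N})
    (if [forall i, (exp_of a i <= k i)%N] then h ^+ tdeg (exp_of a) else 0)
    = \sum_(a : {ffun 'I_n -> 'I_N}) \prod_i F i (a i).
  apply: eq_bigr => a _; case: ifP => [/forallP le_ak | /negbT not_le_ak].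
    rewrite /tdeg expr_sum; apply: eq_bigr => i _.
    by rewrite /F; have := le_ak i; rewrite !ffunE => ->.
  have /forallPn [i not_le_i] := not_le_ak.
  by rewrite (bigD1 i) //= /F; move: not_le_i; rewrite ffunE => /negbTE ->; rewrite mul0r.
rewrite -bigA_distr_bigA /=.
apply: le_trans (_ : _ <= \prod_(i < n) 2) _; last by rewrite prodr_const card_ord.
apply: ler_prod => i _; rewrite sumr_ge0 //=.
apply: le_trans (sum_geom_half_le N h_ge0 h_half).
by apply: ler_sum => j _; rewrite /F; case: ifP; rewrite ?exprn_ge0.
Qed.

(* With [f] bounded on the doubled radius, the term of index [a] of the Cauchy
   product is at most [M1 * M2 / 2 ^ tdeg a]. *)
Lemma bounded_by_sermul (f g : ser) r M1 M2 : 0 <= r ->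
  bounded_by f (2 * r) M1 -> bounded_by g r M2 ->
  bounded_by (sermul f g) r (M1 * M2 * 2 ^+ n).
Proof.
move=> r_ge0 bd_f bd_g k.
set c := (r%:C)%C; set h := (((2 : R)^-1)%:C)%C.
have c_ge0 : 0 <= c by rewrite lecR.
have h_ge0 : 0 <= h by rewrite lecR invr_ge0 ler0n.
have h_half : 2 * h = 1.
  rewrite (_ : 2 = ((2 : R)%:C)%C); last by rewrite rmorph_nat.
  by rewrite -rmorphM divff ?rmorph1 ?pnatr_eq0.
have c_half : ((2 * r)%:C)%C * h = c by rewrite -rmorphM mulrAC divff ?mul1r ?pnatr_eq0.
have M1_ge0 : 0 <= (M1%:C)%C :> R[i].
  by rewrite lecR (bounded_by_ge0 _ bd_f) ?mulr_ge0.
apply: le_trans (ler_wpM2r (exprn_ge0 _ c_ge0) (ler_norm_sum _ _ _)) _.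
rewrite mulr_suml !rmorphM rmorphXn rmorph_nat.
apply: le_trans (_ : \sum_(a : {ffun 'I_n -> 'I_(\max_(i < n) k i).+1} |
     [forall i, (exp_of a i <= k i)%N])
   (M1%:C)%C * (M2%:C)%C * h ^+ tdeg (exp_of a) <= _); last first.
  rewrite -mulr_sumr ler_wpM2l ?mulr_ge0 ?sum_geom_half_tdeg_le //.
  by rewrite lecR (bounded_by_ge0 _ bd_g).
apply: ler_sum => a le_ak; set b := expsub k (exp_of a).
have -> : `|f (exp_of a) * g b| * c ^+ tdeg k
    = (`|f (exp_of a)| * c ^+ tdeg (exp_of a)) * (`|g b| * c ^+ tdeg b).
  rewrite -[tdeg k](congr1 (@tdeg n) (expsubK le_ak)) tdeg_expadd exprD normrM.
  by ring.
rewrite [X in _ <= X]mulrAC; apply: ler_pM; rewrite ?mulr_ge0 ?normr_ge0 ?exprn_ge0 ?bd_g //.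
by rewrite -c_half exprMn mulrA ler_wpM2r ?exprn_ge0 ?bd_f.
Qed.

Lemma convergent_sermul (f g : ser) :
  convergent f -> convergent g -> convergent (sermul f g).
Proof.
move=> [r1 [M1 [r1_gt0 bd_f]]] [r2 [M2 [r2_gt0 bd_g]]].
have min_gt0 : 0 < Num.min r1 r2 by rewrite lt_min r1_gt0.
pose r := Num.min r1 r2 / 2.
have r_gt0 : 0 < r by rewrite divr_gt0.
have le_min1 : Num.min r1 r2 <= r1 by rewrite ge_min lexx.
have le_min2 : Num.min r1 r2 <= r2 by rewrite ge_min lexx orbT.
exists r, (M1 * M2 * 2 ^+ n); split=> //; apply: bounded_by_sermul; first exact: ltW.
  by apply: bounded_by_le bd_f; apply/andP; split; rewrite /r; lra.
by apply: bounded_by_le bd_g; apply/andP; split; rewrite /r; lra.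
Qed.

Lemma convergent_monom (a : expo) : convergent (monom R a).
Proof.
exists 1, 1; split=> // k; rewrite rmorph1 expr1n mulr1 /monom.
by case: ifP => _; rewrite ?normr1 ?normr0 ?ler01.
Qed.

Lemma convergent_shift (f : ser) (a : expo) : convergent f ->
  convergent (fun k => f (expadd k a)).
Proof.
move=> [r [M [r_gt0 bd_f]]]; exists r, (M / r ^+ tdeg a); split=> // k.
rewrite rmorphM fmorphV rmorphXn ler_pdivlMr ?exprn_gt0 ?ltcR //.
by have := bd_f (expadd k a); rewrite tdeg_expadd exprD mulrA.
Qed.

Section Support.
Variable L : pred 'I_n.

Definition expo_on (k : expo) := [forall i, ~~ L i ==> (k i == 0%N)].

Definition ser_on (f : ser) := forall k, f k != 0 -> forall i, ~~ L i -> k i = 0%N.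

Lemma expo_onP (k : expo) : reflect (forall i, ~~ L i -> k i = 0%N) (expo_on k).
Proof.
apply: (iffP forallP) => [on_k i notLi | on_k i]; last by apply/implyP => /on_k ->.
by have := on_k i; rewrite notLi => /eqP.
Qed.

Lemma restrictE (f : ser) k : Defs.restrict L f k = if expo_on k then f k else 0.
Proof. by []. Qed.

Lemma ser_on_monom (a : expo) : expo_on a -> ser_on (monom R a).
Proof.
move=> /expo_onP on_a k; rewrite /monom.
by case: (eqVneq k a) => [-> _ | _]; rewrite ?eqxx.
Qed.

Lemma ser_on_restrict (f : ser) : ser_on (Defs.restrict L f).
Proof. by move=> k; rewrite restrictE; case: expo_onP => // _; rewrite eqxx. Qed.

Lemma restrict_id (f : ser) : ser_on f -> Defs.restrict L f = f.
Proof.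
move=> on_f; apply: functional_extensionality => k; rewrite restrictE.
case: expo_onP => // not_on_k.
by case: (eqVneq (f k) 0) => // /on_f.
Qed.

Lemma ser_on_sermul (f g : ser) : ser_on f -> ser_on g -> ser_on (sermul f g).
Proof.
move=> on_f on_g k /sermul_neq0[a [b [nz_f nz_g ->]]] i notLi.
by rewrite ffunE (on_f _ nz_f i notLi) (on_g _ nz_g i notLi).
Qed.

Lemma ser_on_sum m (g : 'I_m -> ser) : (forall i, ser_on (g i)) ->
  ser_on (fun k => \sum_(i < m) g i k).
Proof.
move=> on_g k nz_sum; have [/existsP[i /on_g] //|/existsPn zero_g] :=
  boolP [exists i, g i k != 0].
by case/eqP: nz_sum; apply: big1 => i _; have := zero_g i; rewrite negbK => /eqP.
Qed.

Lemma restrict_sermul (h f : ser) : ser_on h ->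
  Defs.restrict L (sermul h f) = sermul h (Defs.restrict L f).
Proof.
move=> on_h; apply: functional_extensionality => k; rewrite restrictE.
case: expo_onP => [on_k | not_on_k].
  apply: eq_bigr => a _; rewrite restrictE; case: expo_onP => // [][i notLi].
  by rewrite ffunE on_k.
apply/esym/big1 => a /forallP le_ak.
have [->|/on_h on_a] := eqVneq (h (exp_of a)) 0; first by rewrite mul0r.
rewrite restrictE; case: expo_onP => [on_ka|]; last by rewrite mulr0.
case: not_on_k => i notLi; have := on_ka i notLi.
by rewrite ffunE on_a // subn0.
Qed.

Lemma restrict_sum m (g : 'I_m -> ser) :
  Defs.restrict L (fun k => \sum_(i < m) g i k) = (fun k => \sum_(i < m) Defs.restrict L (g i) k).
Proof.
apply: functional_extensionality => k; rewrite restrictE; case: ifP => on_k.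
  by apply: eq_bigr => i _; rewrite restrictE on_k.
by apply/esym/big1 => i _; rewrite restrictE on_k.
Qed.

Lemma convergent_restrict (f : ser) : convergent f -> convergent (Defs.restrict L f).
Proof.
move=> [r [M [r_gt0 bd_f]]]; exists r, M; split=> // k; rewrite restrictE.
case: ifP => _ //; rewrite normr0 mul0r; apply: le_trans (bd_f k).
by rewrite mulr_ge0 ?normr_ge0 ?exprn_ge0 ?lecR ?ltW.
Qed.

Lemma OnL_monom0 : OnL L (monom R expo0).
Proof.
split; first exact: convergent_monom.
by apply: ser_on_monom; apply/expo_onP => i _; rewrite ffunE.
Qed.

End Support.

Section GeneratedIdeal.
Variables S G : ser -> Prop.

Lemma gen_ideal0 : gen_ideal S G (@ser0 R n).
Proof.
exists 0%N, (fun _ => @ser0 R n), (fun _ => @ser0 R n).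
split; first by case.
split; first by case.
by apply: functional_extensionality => k; rewrite big_ord0.
Qed.

Lemma gen_ideal_sermul (h g : ser) : S h -> G g -> gen_ideal S G (sermul h g).
Proof.
move=> Sh Gg; exists 1%N, (fun _ => h), (fun _ => g); do 2!split=> //.
by apply: functional_extensionality => k; rewrite big_ord1.
Qed.

Lemma gen_ideal_gen (g : ser) : S (monom R expo0) -> G g -> gen_ideal S G g.
Proof. by move=> S1 Gg; rewrite -[g]sermul1; apply: gen_ideal_sermul. Qed.

Lemma gen_idealD (f1 f2 : ser) : gen_ideal S G f1 -> gen_ideal S G f2 ->
  gen_ideal S G (seradd f1 f2).
Proof.
move=> [m1 [h1 [g1 [Sh1 [Gg1 ->]]]]] [m2 [h2 [g2 [Sh2 [Gg2 ->]]]]].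
pose cat T (x1 : 'I_m1 -> T) (x2 : 'I_m2 -> T) (i : 'I_(m1 + m2)) :=
  match split i with inl i1 => x1 i1 | inr i2 => x2 i2 end.
exists (m1 + m2)%N, (cat _ h1 h2), (cat _ g1 g2).
split; first by move=> i; rewrite /cat; case: split.
split; first by move=> i; rewrite /cat; case: split.
apply: functional_extensionality => k; rewrite big_split_ord /=.
by congr (_ + _); apply: eq_bigr => i _; rewrite /cat ?(unsplitK (inl _ i)) ?(unsplitK (inr _ i)).
Qed.

Lemma gen_ideal_sum m (g : 'I_m -> ser) : (forall i, gen_ideal S G (g i)) ->
  gen_ideal S G (fun k => \sum_(i < m) g i k).
Proof.
elim: m g => [|m IH] g gen_g.
  suff -> : (fun k => \sum_(i < 0) g i k) = @ser0 R n by apply: gen_ideal0.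
  by apply: functional_extensionality => k; rewrite big_ord0.
suff -> : (fun k => \sum_(i < m.+1) g i k) =
    seradd (fun k => \sum_(i < m) g (widen_ord (leqnSn m) i) k) (g ord_max).
  by apply: gen_idealD; [apply: IH | apply: gen_g].
by apply: functional_extensionality => k; rewrite big_ord_recr.
Qed.

End GeneratedIdeal.

Lemma ideal_sum (J : ser -> Prop) m (g : 'I_m -> ser) : is_ideal J ->
  (forall i, J (g i)) -> J (fun k => \sum_(i < m) g i k).
Proof.
case=> _ J0 JD _; elim: m g => [|m IH] g J_g.
  suff -> : (fun k => \sum_(i < 0) g i k) = @ser0 R n by [].
  by apply: functional_extensionality => k; rewrite big_ord0.
suff -> : (fun k => \sum_(i < m.+1) g i k) =
    seradd (fun k => \sum_(i < m) g (widen_ord (leqnSn m) i) k) (g ord_max).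
  by apply: JD; [apply: IH | apply: J_g].
by apply: functional_extensionality => k; rewrite big_ord_recr.
Qed.

Lemma ser_on_shift L (t : ser) (a : expo) : ser_on L t ->
  ser_on L (fun k => t (expadd k a)).
Proof.
move=> on_t k /on_t on_ka i /on_ka; rewrite ffunE => /eqP.
by rewrite addn_eq0 => /andP[/eqP].
Qed.

Lemma sermul_monom_shift (t : ser) (a : expo) :
  (forall k, t k != 0 -> expo_le a k) ->
  t = sermul (fun k => t (expadd k a)) (monom R a).
Proof.
move=> supp_t; apply: functional_extensionality => k; rewrite sermul_monomr.
case: ifP => [le_ak | not_le_ak]; first by rewrite expsubK.
by apply/eqP; apply: contraFT not_le_ak => /supp_t.
Qed.

Lemma restrict_sermul_monom0 L (c : ser) (a : expo) : ~~ expo_on L a ->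
  Defs.restrict L (sermul c (monom R a)) = @ser0 R n.
Proof.
move=> /expo_onP not_on_a; apply: functional_extensionality => k.
rewrite restrictE sermul_monomr; case: expo_onP => // on_k.
case: ifP => // /forallP le_ak; case: not_on_a => i notLi.
by apply/eqP; rewrite -leqn0 -(on_k i notLi).
Qed.

Lemma is_initial_restrict L (F : ser) (a : expo) : expo_on L a ->
  is_initial F a -> is_initial (Defs.restrict L F) a.
Proof.
move=> on_a [nz_Fa max_a]; rewrite /is_initial restrictE on_a.
by split=> // b; rewrite restrictE; case: ifP => _; [apply: max_a | rewrite eqxx].
Qed.

(* For [L = {j, ..., n}] an exponent leaving [L] is smaller in the negative
   lexicographic order than every exponent on [L]: it is nonzero at the first
   index [i < j] where it leaves [L]. *)
Lemma is_initial_restrict_Lfrom (j : 'I_n) (F : ser) (a : expo) :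
  is_initial (Defs.restrict (Lfrom j) F) a -> is_initial F a.
Proof.
rewrite /is_initial restrictE.
case: ifP => [on_a [nz_Fa max_a] | _ []]; last by rewrite eqxx.
split=> // b nz_Fb ne_ba; case: (boolP (expo_on (Lfrom j) b)) => [on_b | ].
  by apply: max_a; rewrite // restrictE on_b.
move=> /forallPn [i0]; rewrite negb_imply => /andP[notL_i0 nz_i0].
case: (@arg_minnP _ i0 (fun i => b i != 0%N) val nz_i0) => i nz_bi min_i.
have lt_ij : (i < j)%N.
  by apply: leq_ltn_trans (min_i i0 nz_i0) _; rewrite ltnNge.
have a_lt_j (i' : 'I_n) : (i' < j)%N -> a i' = 0%N.
  by move=> lt_i'j; apply: (expo_onP _ _ on_a); rewrite /Lfrom -ltnNge.
exists i; split; last by rewrite a_lt_j // lt0n.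
move=> i' lt_i'i; rewrite a_lt_j ?(ltn_trans lt_i'i) //.
by case: (eqVneq (b i') 0%N) => // /min_i; rewrite leqNgt lt_i'i.
Qed.

Lemma init_ideal_sermul_monom (S K : ser -> Prop) (h F : ser) (a : expo) :
  S h -> K F -> is_initial F a -> init_ideal S K (sermul h (monom R a)).
Proof.
move=> Sh KF in_Fa; apply: gen_ideal_sermul => //; exists F, a; do 2!split=> //.
by move=> F0; move: in_Fa.1; rewrite F0 eqxx.
Qed.

Lemma restr_ideal_restrict L (J : ser -> Prop) (F : ser) :
  J F -> restr_ideal L J (Defs.restrict L F).
Proof. by move=> JF; apply: gen_ideal_gen; [apply: OnL_monom0 | exists F]. Qed.

Lemma restr_ideal_lift L (J : ser -> Prop) (F : ser) : is_ideal J ->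
  restr_ideal L J F -> exists2 F', J F' & Defs.restrict L F' = F.
Proof.
move=> idJ [m [h [g [Sh [Gg ->]]]]].
have /fin_all_exists[F' F'P] : forall i, exists F', J F' /\ g i = Defs.restrict L F'.
  exact: Gg.
exists (fun k => \sum_(i < m) sermul (h i) (F' i) k).
  have [_ _ _ J_mul] := idJ.
  by apply: ideal_sum => // i; apply: J_mul; [apply: (Sh i).1 | apply: (F'P i).1].
rewrite restrict_sum; apply: functional_extensionality => k.
by apply: eq_bigr => i _; rewrite restrict_sermul ?(F'P i).2 //; apply: (Sh i).2.
Qed.

Lemma init_restr_subset (j : 'I_n) (J : ser -> Prop) (f : ser) : is_ideal J ->
  init_ideal (OnL (Lfrom j)) (restr_ideal (Lfrom j) J) f ->
  restr_ideal (Lfrom j) (init_ideal (@convergent R n) J) f.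
Proof.
move=> idJ [m [h [g [Sh [Gg ->]]]]]; exists m, h, g; split=> //; split=> // i.
have [F [a [JLF [_ [in_Fa ->]]]]] := Gg i.
have [F' JF' def_F] := restr_ideal_lift idJ JLF.
have on_a : expo_on (Lfrom j) a.
  by apply/expo_onP; apply: (@ser_on_restrict (Lfrom j) F' a); rewrite def_F; apply: in_Fa.1.
exists (monom R a); split; last by rewrite restrict_id //; apply: ser_on_monom.
rewrite -[monom R a]sermul1; apply: init_ideal_sermul_monom JF' _.
  exact: convergent_monom.
by apply: (is_initial_restrict_Lfrom (j := j)); rewrite def_F.
Qed.

Lemma init_restr_sermul_monom L (J : ser -> Prop) (h c F : ser) (a : expo) :
  OnL L h -> convergent c -> J F -> is_initial F a ->
  init_ideal (OnL L) (restr_ideal L J) (sermul h (Defs.restrict L (sermul c (monom R a)))).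
Proof.
move=> [conv_h on_h] conv_c JF in_Fa.
have [on_a | not_on_a] := boolP (expo_on L a); last first.
  by rewrite restrict_sermul_monom0 // sermulr0; apply: gen_ideal0.
set t := sermul h _.
have on_t : ser_on L t by apply: ser_on_sermul; [exact: on_h | exact: ser_on_restrict].
have supp_t k : t k != 0 -> expo_le a k.
  move=> /sermul_neq0[b [b' [_ nz_b' ->]]]; move: nz_b'.
  rewrite restrictE sermul_monomr; case: ifP => _; last by rewrite eqxx.
  case: ifP => [/forallP le_ab' _ | _]; last by rewrite eqxx.
  by apply/forallP=> i; rewrite ffunE (leq_trans (le_ab' i)) ?leq_addl.
rewrite (sermul_monom_shift supp_t).
apply: init_ideal_sermul_monom (restr_ideal_restrict L JF) (is_initial_restrict on_a in_Fa).
split; last exact: ser_on_shift.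
apply/convergent_shift/convergent_sermul => //.
by apply/convergent_restrict/convergent_sermul => //; apply: convergent_monom.
Qed.

Lemma restr_init_subset L (J : ser -> Prop) (f : ser) :
  restr_ideal L (init_ideal (@convergent R n) J) f ->
  init_ideal (OnL L) (restr_ideal L J) f.
Proof.
move=> [m [h [g [Sh [Gg ->]]]]]; apply: gen_ideal_sum => i.
have [G [[m' [c [mon [Sc [Gmon ->]]]]] ->]] := Gg i.
rewrite restrict_sum sermul_sumr; apply: gen_ideal_sum => l.
have [F [a [JF [_ [in_Fa ->]]]]] := Gmon l.
exact: init_restr_sermul_monom (Sh i) (Sc l) JF in_Fa.
Qed.

End PowerSeries.

Theorem lemma2p3 (R : realType) (n : nat) (J : ser R n -> Prop) (j : 'I_n) :
  is_ideal J -> finite_colength J ->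
  forall f : ser R n,
    init_ideal (OnL (Lfrom j)) (restr_ideal (Lfrom j) J) f <->
    restr_ideal (Lfrom j) (init_ideal (@convergent R n) J) f.
Proof.
move=> idJ _ f; split; [exact: init_restr_subset | exact: restr_init_subset].
Qed.
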